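(* Let $P(x)=\sum_{j=0}^n a_jx^j$ be a real polynomial of degree $n$, and let $m\in\{0,1,\dots,n\}$ be such that $a_j\ge0$ for all $m\le j\le n$. For $r>0$ define \[ b(r):=\sum_{j=m}^n a_jr^{j-m},\qquad c(r):=\max_{1\le i\le m}\left(\frac{|a_{m-i}|}{b(r)}\right)^{1/i},\qquad \nu_r(P):=\max\{r,\,2c(r)\}. \] Then $P(x)>0$ for all $x>\nu_r(P)$. *)

From HB Require Import structures.
From mathcomp Require Import all_boot all_order all_algebra.
From mathcomp Require Import all_classical all_reals all_analysis.
Set Implicit Arguments. Unset Strict Implicit. Unset Printing Implicit Defensive.
Import Order.TTheory GRing.Theory Num.Theory.
Local Open Scope ring_scope.

(* n = degree of p, a_j = p`_j *)
Definition bcoef (R : realType) (p : {poly R}) (m : nat) (r : R) : R :=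
  \sum_(m <= j < (size p).-1.+1) p`_j * r ^+ (j - m).

(* c(r) = max_{1 <= i <= m} (|a_{m-i}| / b(r))^(1/i); empty max (m = 0) is 0 *)
Definition ccoef (R : realType) (p : {poly R}) (m : nat) (r : R) : R :=
  \big[Num.max/0]_(i < m)
     powR (`|p`_(m - i.+1)| / bcoef p m r) ((i.+1)%:R)^-1.

Definition nu_r (R : realType) (p : {poly R}) (m : nat) (r : R) : R :=
  Num.max r (2 * ccoef p m r).

From HB Require Import structures.
From mathcomp Require Import ring lra.
From mathcomp Require Import all_boot all_order all_algebra.
From mathcomp Require Import all_classical all_reals all_analysis.
Set Implicit Arguments.
Unset Strict Implicit.
Unset Printing Implicit Defensive.
Import Order.TTheory GRing.Theory Num.Theory.
Local Open Scope ring_scope.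

(* Split [P(x)] at degree [m]. With [b := b(r)], [c := c(r)] and [x > nu_r(P)]:
   the high part is at least [b x^m], since [a_j >= 0] there and [x > r];
   the definition of [c] gives [|a_(m-k)| <= b c^k], so as [c < x/2] each low
   term [|a_(m-k)| x^(m-k)] is at most [b x^m 2^-k]; summing over [k = 1..m]
   the low part is at most [b x^m (1 - 2^-m)] in absolute value. *)

Lemma sum_halves (R : numFieldType) (m : nat) :
  \sum_(j < m) (2^-1 : R) ^+ (m - j) = 1 - 2^-1 ^+ m.
Proof.
elim: m => [|m IHm]; first by rewrite big_ord0 expr0 subrr.
rewrite big_ord_recr /= subSnn expr1.
under eq_bigr => i _ do rewrite /= subSn 1?ltnW // exprS.
by rewrite -mulr_sumr IHm exprS; field.
Qed.

Lemma exprn_le_of_powR_inv (R : realType) (y c : R) (k : nat) :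
  (0 < k)%N -> 0 <= y -> powR y k%:R^-1 <= c -> y <= c ^+ k.
Proof.
move=> k_gt0 y_ge0 root_le.
have -> : y = powR y k%:R^-1 ^+ k.
  by rewrite -powR_mulrn ?powR_ge0 // -powRrM mulVf ?powRr1 // pnatr_eq0 -lt0n.
by rewrite lerXn2r ?nnegrE ?powR_ge0 // (le_trans _ root_le) ?powR_ge0.
Qed.

Lemma exprn_le_half_pow (R : realFieldType) (c x : R) (j k : nat) :
  0 <= c -> 2 * c <= x -> c ^+ k * x ^+ j <= x ^+ (k + j) * 2^-1 ^+ k.
Proof.
move=> c_ge0 cx; have x_ge0 : 0 <= x by lra.
rewrite exprD mulrAC ler_wpM2r ?exprn_ge0 // -exprMn.
by rewrite lerXn2r ?nnegrE ?mulr_ge0 //; lra.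
Qed.

Lemma low_part_le (R : realFieldType) (a : nat -> R) (b c x : R) (m : nat) :
  0 <= b -> 0 <= c -> 2 * c <= x ->
  (forall j, (j < m)%N -> `|a j| <= b * c ^+ (m - j)) ->
  - \sum_(0 <= j < m) a j * x ^+ j <= b * x ^+ m * (1 - 2^-1 ^+ m).
Proof.
move=> b_ge0 c_ge0 cx a_le; have x_ge0 : 0 <= x by lra.
rewrite -sum_halves mulr_sumr -sumrN big_mkord; apply: ler_sum => j _.
apply: (le_trans (y := `|a j| * x ^+ j)).
  by rewrite -mulNr ler_wpM2r ?exprn_ge0 // -normrN ler_norm.
apply: (le_trans (y := b * c ^+ (m - j) * x ^+ j)).
  by rewrite ler_wpM2r ?exprn_ge0 ?a_le.
rewrite -!mulrA ler_wpM2l //.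
by have := @exprn_le_half_pow _ c x j (m - j) c_ge0 cx; rewrite subnK // ltnW.
Qed.

Lemma horner_split (R : nzRingType) (p : {poly R}) (m : nat) (x : R) :
  (m <= size p)%N ->
  p.[x] = \sum_(0 <= j < m) p`_j * x ^+ j + \sum_(m <= j < size p) p`_j * x ^+ j.
Proof.
move=> m_le; rewrite horner_coef -(big_mkord xpredT (fun j => p`_j * x ^+ j)).
by rewrite -big_cat_nat.
Qed.

Lemma ccoef_ge0 (R : realType) (p : {poly R}) (m : nat) (r : R) :
  0 <= ccoef p m r.
Proof. exact: bigmax_ge_id. Qed.

Section CauchyBound.
Variables (R : realType) (p : {poly R}) (m : nat) (r : R).
Hypotheses (p_neq0 : p != 0) (m_le_deg : (m <= (size p).-1)%N).
Hypothesis coef_ge0 : forall j, (m <= j <= (size p).-1)%N -> 0 <= p`_j.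
Hypothesis r_gt0 : 0 < r.

Lemma bcoef_gt0 : 0 < bcoef p m r.
Proof.
have lead_gt0 : 0 < p`_(size p).-1.
  by rewrite lt_def coef_ge0 ?m_le_deg ?leqnn // andbT -lead_coefE lead_coef_eq0.
rewrite /bcoef big_nat_recr //= ltr_wpDl ?mulr_gt0 ?exprn_gt0 //.
rewrite big_nat_cond sumr_ge0 // => j /andP[/andP[mj jn] _].
by rewrite mulr_ge0 ?exprn_ge0 // ?(ltW r_gt0) // coef_ge0 // mj ltnW.
Qed.

Lemma norm_coef_le_ccoef j :
  (j < m)%N -> `|p`_j| <= bcoef p m r * ccoef p m r ^+ (m - j).
Proof.
move=> jm; have k_gt0 : (0 < m - j)%N by rewrite subn_gt0.
have i_lt : ((m - j).-1 < m)%N by rewrite prednK // leq_subr.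
rewrite mulrC -ler_pdivrMr ?bcoef_gt0 //.
apply: exprn_le_of_powR_inv => //; first by rewrite divr_ge0 // ltW // bcoef_gt0.
have := le_bigmax 0
  (fun i : 'I_m => powR (`|p`_(m - i.+1)| / bcoef p m r) (i.+1)%:R^-1)
  (Ordinal i_lt).
by rewrite /= prednK // subKn // ltnW.
Qed.

Lemma high_part_ge x : r <= x ->
  x ^+ m * bcoef p m r <= \sum_(m <= j < size p) p`_j * x ^+ j.
Proof.
move=> rx; rewrite /bcoef prednK ?size_poly_gt0 // mulr_sumr.
apply: ler_sum_nat => j /andP[mj jn].
have x_gt0 : 0 < x := lt_le_trans r_gt0 rx.
rewrite -[in x ^+ j](subnKC mj) exprD mulrCA; apply: ler_wpM2l.
  by apply: coef_ge0; rewrite mj -ltnS prednK ?size_poly_gt0.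
rewrite ler_wpM2l ?exprn_ge0 ?(ltW x_gt0) //.
by apply: lerXn2r; rewrite ?nnegrE ?(ltW r_gt0) ?(ltW x_gt0).
Qed.

End CauchyBound.

Theorem proposition1 (R : realType) (p : {poly R}) (m : nat) :
  p != 0 ->
  (m <= (size p).-1)%N ->
  (forall j : nat, (m <= j <= (size p).-1)%N -> 0 <= p`_j) ->
  forall r : R, 0 < r -> forall x : R, nu_r p m r < x -> 0 < p.[x].
Proof.
move=> p_neq0 m_le_deg coef_ge0 r r_gt0 x; rewrite /nu_r gt_max => /andP[rx cx].
have b_gt0 := bcoef_gt0 p_neq0 m_le_deg coef_ge0 r_gt0.
have low := low_part_le (ltW b_gt0) (ccoef_ge0 p m r) (ltW cx)
  (norm_coef_le_ccoef p_neq0 m_le_deg coef_ge0 r_gt0).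
have high := high_part_ge p_neq0 coef_ge0 r_gt0 (ltW rx).
have tail_gt0 : 0 < bcoef p m r * x ^+ m * 2^-1 ^+ m.
  by rewrite !mulr_gt0 ?exprn_gt0 ?invr_gt0 // (lt_trans r_gt0).
rewrite (horner_split x (leq_trans m_le_deg (leq_pred _))).
rewrite mulrBr mulr1 [bcoef p m r * _]mulrC in low.
lra.
Qed.
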